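(* For every 3-periodic $P_1P_2P_3$ of the elliptic billiard, $$\sum_{i=1}^3\frac{1}{|P_i-f_1|}=\frac{a^2+b^2+\delta}{ab^2}=\frac{J\sqrt2\sqrt{JL+\sqrt{9-2JL}-3}}{JL-4},\qquad \delta=\sqrt{a^4-a^2b^2+b^4}.$$
   Context: The elliptic billiard is $\mathcal{E}: x^2/a^2+y^2/b^2=1$, $a>b>0$, $c=\sqrt{a^2-b^2}$, with focus $f_1=(-c,0)$. A 3-periodic is a triangle $P_1P_2P_3$ inscribed in $\mathcal{E}$ that is a closed billiard trajectory (at each vertex the normal to $\mathcal{E}$ bisects the angle between the two incident sides). $L$ is the perimeter (the same for all 3-periodics), $J$ is Joachimsthal's constant $J=\frac12\nabla f(P_i)\cdot\hat v>0$ ($f=x^2/a^2+y^2/b^2$, $\hat v$ unit direction of the trajectory at $P_i$); explicitly $J=\sqrt{2\delta-a^2-b^2}/c^2$ and $L=2(\delta+a^2+b^2)J$. *)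

From Stdlib Require Import Reals Lra.
Open Scope R_scope.

Definition pt := (R * R)%type.

Definition pdist (P Q : pt) : R :=
  sqrt ((fst P - fst Q) ^ 2 + (snd P - snd Q) ^ 2).

Definition on_ellipse (a b : R) (P : pt) : Prop :=
  (fst P) ^ 2 / a ^ 2 + (snd P) ^ 2 / b ^ 2 = 1.

(* half gradient of f = x^2/a^2 + y^2/b^2 at P : a normal vector to the ellipse *)
Definition normal (a b : R) (P : pt) : pt := (fst P / a ^ 2, snd P / b ^ 2).

Definition unit_dir (P Q : pt) : pt :=
  ((fst Q - fst P) / pdist P Q, (snd Q - snd P) / pdist P Q).

Definition cross (u v : pt) : R := fst u * snd v - snd u * fst v.

(* Billiard reflection law at vertex P with neighbours Q, S: the normal
   line to the ellipse at P bisects the angle QPS, i.e. the unit vectors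
   towards Q and towards S are mirror images w.r.t. the normal line,
   equivalently their sum is parallel to the normal. *)
Definition reflects (a b : R) (Q P S : pt) : Prop :=
  cross (normal a b P)
        (fst (unit_dir P Q) + fst (unit_dir P S),
         snd (unit_dir P Q) + snd (unit_dir P S)) = 0.

Definition three_periodic (a b : R) (P1 P2 P3 : pt) : Prop :=
  P1 <> P2 /\ P2 <> P3 /\ P3 <> P1 /\
  on_ellipse a b P1 /\ on_ellipse a b P2 /\ on_ellipse a b P3 /\
  reflects a b P3 P1 P2 /\ reflects a b P1 P2 P3 /\ reflects a b P2 P3 P1.

Definition cc (a b : R) : R := sqrt (a ^ 2 - b ^ 2).
Definition focus1 (a b : R) : pt := (- cc a b, 0).
Definition delta (a b : R) : R := sqrt (a ^ 4 - a ^ 2 * b ^ 2 + b ^ 4).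
(* Joachimsthal's constant and perimeter of 3-periodics (explicit formulas) *)
Definition Jc (a b : R) : R :=
  sqrt (2 * delta a b - a ^ 2 - b ^ 2) / (cc a b) ^ 2.
Definition Lp (a b : R) : R := 2 * (delta a b + a ^ 2 + b ^ 2) * Jc a b.

(* Write the vertices as P_i = (a X_i, b Y_i) with X_i^2 + Y_i^2 = 1; then
   |P_i - f_1| = a + c X_i, so the claim is an identity between the elementary
   symmetric functions S1, S2, S3 of the abscissae X_1, X_2, X_3.
   1. At each vertex the reflection law makes the normal of the ellipse equally
      inclined to both sides, so the Joachimsthal quantity (1 - X X' - Y Y')/|PP'|
      of a side is one and the same number k for the three sides.
   2. A chord with Joachimsthal constant k obeys the bilinear relation
      (u - 1) X X' - (u + 1) Y Y' = g,  u = k^2 c^2,  g = k^2 (a^2 + b^2) - 1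
      ("linked" points).  For three distinct, pairwise linked points of the unit
      circle, Vieta's formulas at every vertex force u^2 + 2 g = 1 (this pins k
      down to J), (u + 1)^2 (S2 + 1) = g^2 and (u + 1)^2 S1 + 4 u S3 = 0.
   3. Modulo delta^2 = a^4 - a^2 b^2 + b^4 these relations give
      (a^2 + b^2 + delta) prod_i (a + c X_i) = a b^2 sum_{i<j} (a + c X_i)(a + c X_j),
      which is the first equality; the second one is a computation with the
      explicit formulas for J and L. *)

From Stdlib Require Import Reals Lra.
Open Scope R_scope.

Lemma sq_pos (x : R) : x <> 0 -> 0 < x^2.
Proof. intro hx. replace (x^2) with (Rsqr x) by (unfold Rsqr; ring). now apply Rsqr_pos_lt. Qed.

Lemma unit_circle_same_abscissa (X Y Y' : R) :
  X^2 + Y^2 = 1 -> X^2 + Y'^2 = 1 -> Y <> Y' -> Y' = - Y.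
Proof.
  intros h h' hne.
  assert (E : (Y' - Y) * (Y' + Y) = 0) by nra.
  destruct (Rmult_integral _ _ E) as [e|e]; [exfalso; apply hne; lra | lra].
Qed.

(* For distinct unit vectors U, U', the quantity 1 - <U, U'> = |U - U'|^2 / 2 is positive;
   it is the numerator of the Joachimsthal quantity of a chord. *)
Lemma unit_chord_gap (X Y X' Y' : R) :
  X^2 + Y^2 = 1 -> X'^2 + Y'^2 = 1 -> (X <> X' \/ Y <> Y') -> 0 < 1 - X*X' - Y*Y'.
Proof.
  intros h h' hne.
  assert (E : 1 - X*X' - Y*Y' = ((X - X')^2 + (Y - Y')^2) / 2) by nra.
  rewrite E. pose proof (pow2_ge_0 (X - X')). pose proof (pow2_ge_0 (Y - Y')).
  destruct hne as [hx|hy].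
  - pose proof (sq_pos (X - X') ltac:(lra)). lra.
  - pose proof (sq_pos (Y - Y') ltac:(lra)). lra.
Qed.

(* The bilinear relation satisfied by the parameters of the endpoints of a chord
   of Joachimsthal constant k, with u = k^2 c^2 and g = k^2 (a^2 + b^2) - 1. *)
Definition linked (u g X Y X' Y' : R) : Prop :=
  (u - 1)*X*X' - (u + 1)*Y*Y' = g.

Lemma linked_sym (u g X Y X' Y' : R) :
  linked u g X Y X' Y' -> linked u g X' Y' X Y.
Proof. unfold linked. intro e. rewrite <- e. ring. Qed.

Lemma linked_root (u g Xi Yi X Y : R) :
  Xi^2 + Yi^2 = 1 -> X^2 + Y^2 = 1 -> linked u g Xi Yi X Y ->
  ((u+1)^2 - 4*u*Xi^2)*X^2 - 2*(u-1)*g*Xi*X + g^2 - (u+1)^2*(1 - Xi^2) = 0.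
Proof.
  unfold linked. intros hi h e. rewrite <- e.
  transitivity ((u+1)^2*Yi^2*(X^2 + Y^2 - 1) + (u+1)^2*(1 - Xi^2 - Yi^2)*(X^2 - 1));
    [ring|].
  replace (X^2 + Y^2 - 1) with 0 by lra. replace (1 - Xi^2 - Yi^2) with 0 by lra. ring.
Qed.

(* Vieta's formulas: the abscissae of two distinct points linked to (Xi, Yi) are the two
   roots of the quadratic of linked_root (for a vertical chord, Xi = +-1 and both
   formulas degenerate to identities). *)
Lemma linked_vieta (u g Xi Yi Xj Yj Xk Yk : R) : -1 < u ->
  Xi^2 + Yi^2 = 1 -> Xj^2 + Yj^2 = 1 -> Xk^2 + Yk^2 = 1 -> (Xj <> Xk \/ Yj <> Yk) ->
  linked u g Xi Yi Xj Yj -> linked u g Xi Yi Xk Yk ->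
  ((u+1)^2 - 4*u*Xi^2)*(Xj + Xk) = 2*(u-1)*g*Xi /\
  ((u+1)^2 - 4*u*Xi^2)*(Xj*Xk) = g^2 - (u+1)^2*(1 - Xi^2).
Proof.
  intros hu hi hj hk hjk ej ek.
  pose proof (linked_root _ _ _ _ _ _ hi hj ej) as qj.
  pose proof (linked_root _ _ _ _ _ _ hi hk ek) as qk.
  set (D := (u+1)^2 - 4*u*Xi^2) in *.
  destruct (Req_dec Xj Xk) as [exk|nxk].
  - (* a vertical chord: then (Xi, Yi) = (+-1, 0) and both sides reduce to identities *)
    subst Xk. destruct hjk as [hjk|hjk]; [congruence|].
    pose proof (unit_circle_same_abscissa Xj Yj Yk hj hk hjk) as hyk. subst Yk.
    unfold linked in ej, ek.
    assert (hyi : (u+1)*Yi*Yj = 0) by lra.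
    assert (Yi = 0) as ->.
    { destruct (Rmult_integral _ _ hyi) as [h|h]; [|exfalso; apply hjk; lra].
      destruct (Rmult_integral _ _ h); [lra|assumption]. }
    assert (hxi : Xi^2 = 1) by lra.
    unfold D. rewrite <- ej.
    split; [ transitivity (2*(u-1)^2*Xj*Xi^2)
           | transitivity (((u-1)*Xj)^2*Xi^2 - (u+1)^2*(1 - Xi^2)) ];
      try ring; rewrite hxi; ring.
  - assert (hsum : D*(Xj + Xk) = 2*(u-1)*g*Xi).
    { assert (E : (Xj - Xk)*(D*(Xj + Xk) - 2*(u-1)*g*Xi) = 0).
      { rewrite <- (Rminus_diag_eq _ _ (eq_trans qj (eq_sym qk))). ring. }
      destruct (Rmult_integral _ _ E); [exfalso; apply nxk; lra | lra]. }
    split; [exact hsum|].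
    assert (E : D*(Xj*Xk) = Xj*(D*(Xj + Xk)) - D*Xj^2) by ring.
    rewrite hsum in E. lra.
Qed.

(* If u + g > 1, two linked points lie strictly on opposite sides of the X-axis:
   writing p = <U, U'>, the relation reads (u - 1) p - 2 u Y Y' = g with |p| <= 1. *)
Lemma linked_opposite_sides (u g X Y X' Y' : R) : 0 < u -> u - 1 < g -> 1 < u + g ->
  X^2 + Y^2 = 1 -> X'^2 + Y'^2 = 1 -> linked u g X Y X' Y' -> Y*Y' < 0.
Proof.
  unfold linked. intros hu hg hug h h' e.
  destruct (Rlt_or_le (Y*Y') 0) as [l|l]; [exact l|exfalso].
  set (p := X*X' + Y*Y').
  assert (hp : -1 <= p <= 1).
  { unfold p. pose proof (pow2_ge_0 (X - X')). pose proof (pow2_ge_0 (Y - Y')).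
    pose proof (pow2_ge_0 (X + X')). pose proof (pow2_ge_0 (Y + Y')). nra. }
  assert (e' : (u - 1)*p - 2*u*(Y*Y') = g) by (unfold p; lra).
  assert ((u - 1)*p >= g) by nra.
  destruct (Rle_or_lt 1 u); nra.
Qed.

(* Subtracting the Vieta sum relations at two vertices with different abscissae
   yields a linear relation for S2 (given through S1 and the two abscissae). *)
Lemma vertex_sums_force (u g S1 S2 Xa Xb : R) : Xa <> Xb ->
  ((u+1)^2 - 4*u*Xa^2)*(S1 - Xa) = 2*(u-1)*g*Xa ->
  ((u+1)^2 - 4*u*Xb^2)*(S1 - Xb) = 2*(u-1)*g*Xb ->
  S2 = Xa*Xb + (Xa + Xb)*(S1 - Xa - Xb) ->
  2*(u-1)*g + (u+1)^2 + 4*u*S2 = 0.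
Proof.
  intros hab ha hb hS2.
  assert (E : (Xa - Xb)*(2*(u-1)*g + (u+1)^2 + 4*u*S2)
              = (((u+1)^2 - 4*u*Xb^2)*(S1 - Xb) - 2*(u-1)*g*Xb)
                - (((u+1)^2 - 4*u*Xa^2)*(S1 - Xa) - 2*(u-1)*g*Xa))
    by (rewrite hS2; ring).
  rewrite ha, hb in E.
  assert (E' : (Xa - Xb)*(2*(u-1)*g + (u+1)^2 + 4*u*S2) = 0) by lra.
  destruct (Rmult_integral _ _ E'); [exfalso; apply hab; lra | assumption].
Qed.

(* The products Y1 Y2, Y2 Y3, Y3 Y1 cannot all be negative: their product is a square. *)
Lemma three_negative_products (Y1 Y2 Y3 : R) :
  Y1*Y2 < 0 -> Y2*Y3 < 0 -> Y3*Y1 < 0 -> False.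
Proof.
  intros h12 h23 h31.
  assert (0 < (Y1*Y2)*(Y2*Y3)) by nra.
  assert ((Y1*Y2)*(Y2*Y3)*(Y3*Y1) < 0) by nra.
  pose proof (pow2_ge_0 (Y1*Y2*Y3)). nra.
Qed.

(* When u > 0 and u - 1 < g <= 1 - u, the factor (u + 1)(u - 1 + g) + (u - 1) g
   = u^2 - 1 + 2 u g = -(u - 1)^2 - 2 u (1 - u - g) is negative. *)
Lemma resultant_factor_neg (u g : R) : 0 < u -> u - 1 < g -> u + g <= 1 ->
  (u+1)*(u-1+g) + (u-1)*g < 0.
Proof. intros. nra. Qed.

Section LinkedTriangle.

Variables u g X1 Y1 X2 Y2 X3 Y3 : R.
Hypotheses (hu : 0 < u) (hg : u - 1 < g).
Hypotheses (on1 : X1^2 + Y1^2 = 1) (on2 : X2^2 + Y2^2 = 1) (on3 : X3^2 + Y3^2 = 1).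
Hypotheses (d12 : X1 <> X2 \/ Y1 <> Y2) (d23 : X2 <> X3 \/ Y2 <> Y3)
           (d31 : X3 <> X1 \/ Y3 <> Y1).
Hypotheses (l12 : linked u g X1 Y1 X2 Y2) (l23 : linked u g X2 Y2 X3 Y3)
           (l31 : linked u g X3 Y3 X1 Y1).

Local Notation S1 := (X1 + X2 + X3).
Local Notation S2 := (X1*X2 + X1*X3 + X2*X3).
Local Notation S3 := (X1*X2*X3).
Local Notation D X := ((u+1)^2 - 4*u*X^2).

(* Not all three sides can cross the X-axis, so u + g <= 1. *)
Lemma triangle_sum_bound : u + g <= 1.
Proof.
  destruct (Rle_or_lt (u + g) 1) as [l|l]; [exact l|exfalso].
  exact (three_negative_products Y1 Y2 Y3
           (linked_opposite_sides u g _ _ _ _ hu hg l on1 on2 l12)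
           (linked_opposite_sides u g _ _ _ _ hu hg l on2 on3 l23)
           (linked_opposite_sides u g _ _ _ _ hu hg l on3 on1 l31)).
Qed.

Lemma triangle_vieta1 :
  D X1*(X2 + X3) = 2*(u-1)*g*X1 /\ D X1*(X2*X3) = g^2 - (u+1)^2*(1 - X1^2).
Proof. apply (linked_vieta u g X1 Y1 X2 Y2 X3 Y3); auto; [lra | now apply linked_sym]. Qed.

Lemma triangle_vertex_sums :
  D X1*(S1 - X1) = 2*(u-1)*g*X1 /\ D X2*(S1 - X2) = 2*(u-1)*g*X2 /\
  D X3*(S1 - X3) = 2*(u-1)*g*X3.
Proof.
  assert (d13 : X1 <> X3 \/ Y1 <> Y3) by (destruct d31; [left|right]; congruence).
  destruct triangle_vieta1 as [s1 _].
  destruct (linked_vieta u g X2 Y2 X1 Y1 X3 Y3) as [s2 _]; auto;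
    [lra | now apply linked_sym |].
  destruct (linked_vieta u g X3 Y3 X1 Y1 X2 Y2) as [s3 _]; auto;
    [lra | now apply linked_sym |].
  repeat split.
  - rewrite <- s1. ring.
  - rewrite <- s2. ring.
  - rewrite <- s3. ring.
Qed.

Lemma triangle_two_abscissae : X1 <> X2 \/ X1 <> X3.
Proof.
  destruct (Req_dec X1 X2) as [->|h]; [|now left].
  destruct (Req_dec X2 X3) as [<-|h]; [|now right].
  exfalso.
  destruct d12 as [h12|h12]; [congruence|]. destruct d31 as [h31|h31]; [congruence|].
  destruct d23 as [h23|h23]; [congruence|].
  pose proof (unit_circle_same_abscissa X2 Y1 Y2 on1 on2 h12).
  pose proof (unit_circle_same_abscissa X2 Y1 Y3 on1 on3 (not_eq_sym h31)).
  apply h23. congruence.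
Qed.

Lemma triangle_S2_linear : 2*(u-1)*g + (u+1)^2 + 4*u*S2 = 0.
Proof.
  destruct triangle_vertex_sums as (s1 & s2 & s3).
  destruct triangle_two_abscissae as [h|h].
  - apply (vertex_sums_force u g S1 S2 X1 X2 h s1 s2). ring.
  - apply (vertex_sums_force u g S1 S2 X1 X3 h s1 s3). ring.
Qed.

Lemma triangle_S2 : (u+1)^2*(S2 + 1) = g^2.
Proof.
  destruct triangle_vieta1 as [s1 p1].
  assert (E : D X1*S2 = X1*(D X1*(X2 + X3)) + D X1*(X2*X3)) by ring.
  rewrite s1, p1 in E.
  transitivity (D X1*S2 + X1^2*(4*u*S2) + (u+1)^2); [ring|].
  replace (4*u*S2) with (- (2*(u-1)*g + (u+1)^2)) by (pose proof triangle_S2_linear; lra).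
  rewrite E. ring.
Qed.

(* Eliminating S2 between the two previous relations. *)
Lemma triangle_resultant : ((u+1)*(u-1+g))^2 = ((u-1)*g)^2.
Proof.
  pose proof triangle_S2_linear as lin. pose proof triangle_S2 as quad.
  transitivity (((u-1)*g)^2 + (u+1)^2*(2*(u-1)*g + (u+1)^2 + 4*u*S2)
                - 4*u*((u+1)^2*(S2 + 1) - g^2)); [ring|].
  rewrite lin, quad. ring.
Qed.

(* The right factor of the resultant is negative when u + g <= 1 and g > u - 1,
   so the left one vanishes: u^2 + 2 g = 1. *)
Lemma triangle_u_g : u^2 + 2*g = 1.
Proof.
  pose proof (resultant_factor_neg u g hu hg triangle_sum_bound) as neg.
  assert (E : ((u+1)*(u-1+g) - (u-1)*g)*((u+1)*(u-1+g) + (u-1)*g) = 0)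
    by (rewrite <- (Rminus_diag_eq _ _ triangle_resultant); ring).
  destruct (Rmult_integral _ _ E) as [e|e]; lra.
Qed.

(* The relation between S1 and S3, read off at the first vertex; there the leading
   coefficient D X1 = (u - 1)^2 X1^2 + (u + 1)^2 Y1^2 is positive because u <> 1. *)
Lemma triangle_S1_S3 : (u+1)^2*S1 + 4*u*S3 = 0.
Proof.
  destruct triangle_vieta1 as [s1 p1].
  assert (hD : 0 < D X1).
  { assert (u <> 1) by (intro e; pose proof triangle_u_g; subst; lra).
    replace (D X1) with ((u-1)^2 + 4*u*Y1^2)
      by (replace (Y1^2) with (1 - X1^2) by lra; ring).
    pose proof (sq_pos (u-1) ltac:(lra)).
    pose proof (Rmult_le_pos _ _ (Rlt_le _ _ (Rmult_lt_0_compat 4 u ltac:(lra) hu))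
                  (pow2_ge_0 Y1)).
    lra. }
  assert (E : D X1*((u+1)^2*S1 + 4*u*S3) =
              (u+1)^2*D X1*X1 + (u+1)^2*(D X1*(X2+X3)) + 4*u*X1*(D X1*(X2*X3))) by ring.
  rewrite s1, p1 in E.
  assert (E' : D X1*((u+1)^2*S1 + 4*u*S3) = X1*(((u+1)*(u-1+g))^2 - ((u-1)*g)^2))
    by (rewrite E; ring).
  rewrite triangle_resultant in E'.
  assert (E'' : D X1*((u+1)^2*S1 + 4*u*S3) = 0) by (rewrite E'; ring).
  destruct (Rmult_integral _ _ E''); [lra | assumption].
Qed.

Lemma linked_triangle :
  u^2 + 2*g = 1 /\ (u+1)^2*(S2 + 1) = g^2 /\ (u+1)^2*S1 + 4*u*S3 = 0.
Proof. split; [exact triangle_u_g | split; [exact triangle_S2 | exact triangle_S1_S3]]. Qed.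

End LinkedTriangle.

Lemma ellipse_param (a b : R) (P : pt) : 0 < a -> 0 < b -> on_ellipse a b P ->
  exists X Y, P = (a*X, b*Y) /\ X^2 + Y^2 = 1.
Proof.
  intros ha hb h. destruct P as [x y]. exists (x/a), (y/b). split.
  - f_equal; field; lra.
  - unfold on_ellipse in h. simpl in h. rewrite <- h. field. lra.
Qed.

Lemma param_neq (a b X Y X' Y' : R) :
  (a*X, b*Y) <> (a*X', b*Y') -> X <> X' \/ Y <> Y'.
Proof.
  intro h. destruct (Req_dec X X'); [|now left].
  destruct (Req_dec Y Y'); [|now right]. subst. contradiction.
Qed.

Lemma pdist_sym (P Q : pt) : pdist P Q = pdist Q P.
Proof. unfold pdist. f_equal. ring. Qed.

Lemma pdist_param_sq (a b X Y X' Y' : R) :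
  pdist (a*X, b*Y) (a*X', b*Y') ^ 2 = (a*X - a*X')^2 + (b*Y - b*Y')^2.
Proof.
  unfold pdist; cbn [fst snd]. apply pow2_sqrt.
  pose proof (pow2_ge_0 (a*X - a*X')). pose proof (pow2_ge_0 (b*Y - b*Y')). lra.
Qed.

Lemma pdist_param_pos (a b X Y X' Y' : R) : 0 < a -> 0 < b -> (X <> X' \/ Y <> Y') ->
  0 < pdist (a*X, b*Y) (a*X', b*Y').
Proof.
  intros ha hb hne. unfold pdist; cbn [fst snd]. apply sqrt_lt_R0.
  pose proof (pow2_ge_0 (a*X - a*X')). pose proof (pow2_ge_0 (b*Y - b*Y')).
  destruct hne as [h|h].
  - assert (hx : a*X - a*X' <> 0) by (intro e; apply h; apply (Rmult_eq_reg_l a); lra).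
    pose proof (sq_pos _ hx). lra.
  - assert (hy : b*Y - b*Y' <> 0) by (intro e; apply h; apply (Rmult_eq_reg_l b); lra).
    pose proof (sq_pos _ hy). lra.
Qed.

(* Joachimsthal quantity of the chord from (a X, b Y) to (a X', b Y'): minus the scalar
   product of the half-gradient normal (X/a, Y/b) with the unit direction of the chord. *)
Definition chord_joach (a b X Y X' Y' : R) : R :=
  (1 - X*X' - Y*Y') / pdist (a*X, b*Y) (a*X', b*Y').

Lemma chord_joach_sym (a b X Y X' Y' : R) :
  chord_joach a b X Y X' Y' = chord_joach a b X' Y' X Y.
Proof. unfold chord_joach. rewrite pdist_sym. f_equal. ring. Qed.

Lemma chord_joach_pos (a b X Y X' Y' : R) : 0 < a -> 0 < b ->
  X^2 + Y^2 = 1 -> X'^2 + Y'^2 = 1 -> (X <> X' \/ Y <> Y') ->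
  0 < chord_joach a b X Y X' Y'.
Proof.
  intros. apply Rdiv_lt_0_compat; [now apply unit_chord_gap | now apply pdist_param_pos].
Qed.

Lemma bisector_equal_projections (nx ny ux uy wx wy : R) :
  ux^2 + uy^2 = 1 -> wx^2 + wy^2 = 1 -> nx*(uy + wy) - ny*(ux + wx) = 0 ->
  nx*ux + ny*uy < 0 -> nx*wx + ny*wy < 0 -> nx*ux + ny*uy = nx*wx + ny*wy.
Proof.
  intros hu hw hpar hnu hnw.
  assert (E : (nx*(ux - wx) + ny*(uy - wy))*((ux + wx)^2 + (uy + wy)^2)
              = (nx*(ux + wx) + ny*(uy + wy))*((ux^2 + uy^2) - (wx^2 + wy^2))
                + (nx*(uy + wy) - ny*(ux + wx))*((ux - wx)*(uy + wy) - (uy - wy)*(ux + wx)))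
    by ring.
  rewrite hu, hw, hpar in E.
  assert (E' : (nx*(ux - wx) + ny*(uy - wy))*((ux + wx)^2 + (uy + wy)^2) = 0) by lra.
  destruct (Rmult_integral _ _ E') as [h|h]; [lra|exfalso].
  pose proof (pow2_ge_0 (ux + wx)). pose proof (pow2_ge_0 (uy + wy)).
  assert (ux + wx = 0 /\ uy + wy = 0) as [h1 h2]
    by (split; apply Rsqr_0_uniq; unfold Rsqr; lra).
  assert (wx = - ux) as -> by lra. assert (wy = - uy) as -> by lra. lra.
Qed.

Lemma reflects_chord_joach (a b X Y X1 Y1 X2 Y2 : R) : 0 < a -> 0 < b ->
  X^2 + Y^2 = 1 -> X1^2 + Y1^2 = 1 -> X2^2 + Y2^2 = 1 ->
  (X <> X1 \/ Y <> Y1) -> (X <> X2 \/ Y <> Y2) ->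
  reflects a b (a*X1, b*Y1) (a*X, b*Y) (a*X2, b*Y2) ->
  chord_joach a b X Y X1 Y1 = chord_joach a b X Y X2 Y2.
Proof.
  intros ha hb h h1 h2 n1 n2 hr.
  assert (proj : forall X' Y', X'^2 + Y'^2 = 1 -> (X <> X' \/ Y <> Y') ->
    let d := pdist (a*X, b*Y) (a*X', b*Y') in
    a*X/a^2*((a*X' - a*X)/d) + b*Y/b^2*((b*Y' - b*Y)/d) = - chord_joach a b X Y X' Y'
    /\ ((a*X' - a*X)/d)^2 + ((b*Y' - b*Y)/d)^2 = 1).
  { intros X' Y' h' n d.
    pose proof (pdist_param_pos a b X Y X' Y' ha hb n) as dpos.
    pose proof (pdist_param_sq a b X Y X' Y') as dsq. fold d in dpos, dsq.
    unfold chord_joach. fold d. split.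
    - replace (1 - X*X' - Y*Y') with (- (X*(X' - X) + Y*(Y' - Y))) by lra.
      field. lra.
    - transitivity (((a*X - a*X')^2 + (b*Y - b*Y')^2)/d^2); [field; lra|].
      rewrite <- dsq. field. lra. }
  destruct (proj X1 Y1 h1 n1) as [p1 u1]. destruct (proj X2 Y2 h2 n2) as [p2 u2].
  pose proof (chord_joach_pos a b X Y X1 Y1 ha hb h h1 n1).
  pose proof (chord_joach_pos a b X Y X2 Y2 ha hb h h2 n2).
  unfold reflects, cross, normal, unit_dir in hr; cbn [fst snd] in hr.
  assert (E := bisector_equal_projections _ _ _ _ _ _ u1 u2 hr ltac:(lra) ltac:(lra)).
  lra.
Qed.

(* The endpoints of a chord with Joachimsthal quantity k are linked: squaring
   k |PP'| = 1 - <U, U'> and using |PP'|^2 = (1 - <U, U'>) (a^2 + b^2 - c^2 (X X' - Y Y')). *)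
Lemma chord_joach_linked (a b X Y X' Y' k : R) : 0 < a -> 0 < b ->
  X^2 + Y^2 = 1 -> X'^2 + Y'^2 = 1 -> (X <> X' \/ Y <> Y') ->
  chord_joach a b X Y X' Y' = k ->
  linked (k^2*(a^2 - b^2)) (k^2*(a^2 + b^2) - 1) X Y X' Y'.
Proof.
  unfold linked, chord_joach. intros ha hb h h' n hk.
  pose proof (pdist_param_pos a b X Y X' Y' ha hb n) as dpos.
  pose proof (pdist_param_sq a b X Y X' Y') as dsq.
  pose proof (unit_chord_gap X Y X' Y' h h' n) as gpos.
  set (d := pdist (a*X, b*Y) (a*X', b*Y')) in *.
  set (gap := 1 - X*X' - Y*Y') in *.
  set (Q := a^2 + b^2 - (a^2 - b^2)*(X*X' - Y*Y')).
  assert (dQ : d^2 = gap*Q).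
  { rewrite dsq. apply Rminus_diag_uniq.
    transitivity ((a^2 - (a^2 - b^2)*X'^2)*(X^2 + Y^2 - 1)
                  + (b^2 + (a^2 - b^2)*Y^2)*(X'^2 + Y'^2 - 1)); [unfold gap, Q; ring|].
    rewrite h, h'. ring. }
  assert (gk : gap = k*d) by (rewrite <- hk; field; lra).
  assert (hgap : gap = k^2*Q).
  { apply (Rmult_eq_reg_l gap); [|lra].
    transitivity (k^2*d^2); [rewrite gk; ring | rewrite dQ; ring]. }
  unfold gap, Q in hgap. lra.
Qed.

(* Polynomial identities modulo the equation of delta are proved by exhibiting the cofactor. *)
Lemma eq_zero_mod_delta (A B d P Q : R) :
  d^2 = A^2 - A*B + B^2 -> P = (d^2 - (A^2 - A*B + B^2))*Q -> P = 0.
Proof. intros hd ->. rewrite hd. ring. Qed.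

(* 2 delta - A - B > 0, since (2 delta)^2 - (A + B)^2 = 3 (A - B)^2. *)
Lemma delta_gap_pos (A B d : R) : 0 < B -> B < A -> d^2 = A^2 - A*B + B^2 -> 0 < d ->
  0 < 2*d - A - B.
Proof.
  intros hB hAB hd2 hd.
  assert (E : (2*d - (A + B))*(2*d + (A + B)) = 3*(A - B)^2) by nra.
  pose proof (sq_pos (A - B) ltac:(lra)). nra.
Qed.

(* From u^2 + 2 g = 1: x = u c^2 solves x^2 + 2 (A + B) x = 3 c^4, whence x = 2 delta - A - B;
   for u = k^2 c^2 this says that k is the constant J. *)
Lemma linked_parameter_value (A B d u g : R) : 0 < u -> 0 < B -> B < A ->
  d^2 = A^2 - A*B + B^2 -> 0 < d ->
  g*(A - B) = u*(A + B) - (A - B) -> u^2 + 2*g = 1 ->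
  u*(A - B) = 2*d - A - B.
Proof.
  intros hu hB hAB hd2 hd hg hug.
  assert (E : (u*(A - B) + A + B)^2 = (2*d)^2).
  { transitivity ((A - B)^2*(u^2 + 2*g - 1) + 4*(A^2 - A*B + B^2)
                  - 2*(A - B)*(g*(A - B) - (u*(A + B) - (A - B)))); [ring|].
    rewrite hug, hg, <- hd2. ring. }
  assert (0 < u*(A - B)) by (apply Rmult_lt_0_compat; lra).
  assert (E' : (u*(A - B) + A + B - 2*d)*(u*(A - B) + A + B + 2*d) = 0)
    by (rewrite <- (Rminus_diag_eq _ _ E); ring).
  destruct (Rmult_integral _ _ E'); lra.
Qed.

(* The part of the focal identity that is even in c, which only involves S2. *)
Lemma focal_identity_even (A B d u g S2 : R) : 0 < u -> B < A ->
  d^2 = A^2 - A*B + B^2 ->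
  u*(A - B) = 2*d - A - B -> g*(A - B) = u*(A + B) - (A - B) ->
  (u + 1)^2*(S2 + 1) = g^2 ->
  (A + B + d)*(A + (A - B)*S2) - B*(3*A + (A - B)*S2) = 0.
Proof.
  intros hu hAB hd hw hg hS2.
  set (w := 2*d - A - B) in *. set (c2 := A - B) in *.
  assert (hbe : (u + 1)*c2 = w + c2) by (rewrite <- hw; ring).
  assert (hga : g*c2^2 = w*(A + B) - c2^2)
    by (replace (g*c2^2) with ((g*c2)*c2) by ring; rewrite hg, <- hw; ring).
  assert (hmod : (A + d)*((w*(A + B) - c2^2)^2 - c2^2*(w + c2)^2)
                 - A*(2*B - A - d)*c2*(w + c2)^2 = 0).
  { apply (eq_zero_mod_delta A B d _
             (12*A*B*d - 8*A*B^2 + 4*A^2*d - 4*A^2*B - 4*A^3) hd).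
    unfold w, c2. ring. }
  assert (E : c2^4*(u + 1)^2*((A + B + d)*(A + c2*S2) - B*(3*A + c2*S2))
              = c2*((A + d)*((g*c2^2)^2 - c2^2*((u + 1)*c2)^2)
                    - A*(2*B - A - d)*c2*((u + 1)*c2)^2)).
  { transitivity ((A + d)*c2^5*((u + 1)^2*(S2 + 1)) + A*(A + d - 2*B)*c2^4*(u + 1)^2
                  - (A + d)*c2^5*(u + 1)^2); [ring|].
    rewrite hS2. ring. }
  rewrite hga, hbe, hmod, Rmult_0_r in E.
  assert (c2^4*(u + 1)^2 <> 0)
    by (apply Rmult_integral_contrapositive_currified; apply pow_nonzero; unfold c2; lra).
  destruct (Rmult_integral _ _ E); [contradiction | assumption].
Qed.

(* The coefficient of c S1 in the focal identity, once S3 is eliminated. *)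
Lemma focal_identity_odd (A B d u : R) : B < A -> d^2 = A^2 - A*B + B^2 ->
  u*(A - B) = 2*d - A - B ->
  (A + B + d)*(4*A*u - (A - B)*(u + 1)^2) - 8*A*B*u = 0.
Proof.
  intros hAB hd hw.
  set (w := 2*d - A - B) in *. set (c2 := A - B) in *.
  assert (hmod : (A + B + d)*(4*A*w - (w + c2)^2) - 8*A*B*w = 0).
  { apply (eq_zero_mod_delta A B d _ (-4*d + 4*B + 4*A) hd). unfold w, c2. ring. }
  assert (E : c2*((A + B + d)*(4*A*u - c2*(u + 1)^2) - 8*A*B*u)
              = (A + B + d)*(4*A*(u*c2) - (u*c2 + c2)^2) - 8*A*B*(u*c2)) by ring.
  rewrite hw, hmod in E.
  destruct (Rmult_integral _ _ E); [unfold c2 in *; lra | assumption].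
Qed.

(* The focal identity in terms of S1, S2, S3, with S3 eliminated through the odd part:
   (a^2 + B + delta) prod_i (a + c X_i) = a B sum_{i<j} (a + c X_i)(a + c X_j). *)
Lemma focal_identity (a c B d u g S1 S2 S3 : R) : 0 < u -> B < a^2 ->
  c^2 = a^2 - B -> d^2 = (a^2)^2 - a^2*B + B^2 ->
  u*c^2 = 2*d - a^2 - B -> g*c^2 = u*(a^2 + B) - c^2 ->
  (u + 1)^2*(S2 + 1) = g^2 -> (u + 1)^2*S1 + 4*u*S3 = 0 ->
  (a^2 + B + d)*(a^3 + a^2*c*S1 + a*c^2*S2 + c^3*S3)
  = a*B*(3*a^2 + 2*a*c*S1 + c^2*S2).
Proof.
  intros hu hB hc hd hw hg hS2 hS13. rewrite hc in hw, hg.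
  pose proof (focal_identity_even (a^2) B d u g S2 hu hB hd hw hg hS2) as even.
  pose proof (focal_identity_odd (a^2) B d u hB hd hw) as odd.
  rewrite <- hc in even, odd.
  assert (S3 = - ((u + 1)^2*S1)/(4*u)) as -> by (field_simplify_eq; lra).
  apply Rminus_diag_uniq.
  transitivity (a*((a^2 + B + d)*(a^2 + c^2*S2) - B*(3*a^2 + c^2*S2))
     + c*S1*((a^2 + B + d)*(4*a^2*u - c^2*(u + 1)^2) - 8*a^2*B*u)/(4*u)).
  - field. lra.
  - rewrite even, odd. field. lra.
Qed.

Lemma inv_sum3 (r1 r2 r3 N D : R) : 0 < r1 -> 0 < r2 -> 0 < r3 -> D <> 0 ->
  N*(r1*r2*r3) = D*(r2*r3 + r1*r3 + r1*r2) -> / r1 + / r2 + / r3 = N / D.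
Proof.
  intros h1 h2 h3 hD e. apply Rminus_diag_uniq.
  transitivity ((D*(r2*r3 + r1*r3 + r1*r2) - N*(r1*r2*r3))/(r1*r2*r3*D));
    [field; repeat split; lra|].
  rewrite e. unfold Rdiv. ring.
Qed.

Section Ellipse.

Variables a b : R.
Hypotheses (hab : b < a) (hb : 0 < b).

Lemma cc_sq : (cc a b)^2 = a^2 - b^2.
Proof. unfold cc. apply pow2_sqrt. nra. Qed.

Lemma cc_bounds : 0 < cc a b < a.
Proof.
  pose proof cc_sq. assert (0 < cc a b) by (unfold cc; apply sqrt_lt_R0; nra). nra.
Qed.

(* The radicand of delta is positive: it is (a^2 - b^2)^2 + a^2 b^2. *)
Lemma delta_radicand_pos : 0 < a^4 - a^2*b^2 + b^4.
Proof. pose proof (pow2_ge_0 (a^2 - b^2)). pose proof (sq_pos (a*b) ltac:(nra)). nra. Qed.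

Lemma delta_sq : (delta a b)^2 = (a^2)^2 - a^2*b^2 + (b^2)^2.
Proof. unfold delta. rewrite pow2_sqrt by (pose proof delta_radicand_pos; lra). ring. Qed.

Lemma delta_pos : 0 < delta a b.
Proof. unfold delta. apply sqrt_lt_R0, delta_radicand_pos. Qed.

Lemma focus_dist (X Y : R) : X^2 + Y^2 = 1 ->
  pdist (a*X, b*Y) (focus1 a b) = a + cc a b * X.
Proof.
  intro hu. pose proof cc_sq. pose proof cc_bounds.
  unfold pdist, focus1; cbn [fst snd].
  replace ((a*X - - cc a b)^2 + (b*Y - 0)^2) with ((a + cc a b * X)^2).
  - apply sqrt_pow2. nra.
  - replace (Y^2) with (1 - X^2) by lra. nra.
Qed.

Lemma focal_radius_pos (X Y : R) : X^2 + Y^2 = 1 -> 0 < a + cc a b * X.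
Proof. intro hu. pose proof cc_sq. pose proof cc_bounds. nra. Qed.

End Ellipse.

Section ClosedForm.

Variables a B d J L : R.
Hypotheses (ha : 0 < a) (hB : 0 < B) (hBA : B < a^2).
Hypotheses (hd2 : d^2 = (a^2)^2 - a^2*B + B^2) (hd : 0 < d).
Hypotheses (hJ : J = sqrt (2*d - a^2 - B) / (a^2 - B)) (hL : L = 2*(d + a^2 + B)*J).

Local Notation A := (a^2).
Local Notation w := (2*d - a^2 - B).
Local Notation c2 := (a^2 - B).

Let hw : 0 < w := delta_gap_pos A B d hB hBA hd2 hd.

Lemma sqrt_w_sq : sqrt w * sqrt w = w.
Proof. apply sqrt_sqrt. lra. Qed.

Lemma JL_value : J*L = 2*(d + A + B)*w/c2^2.
Proof.
  rewrite hL, hJ. transitivity (2*(d + A + B)*(sqrt w * sqrt w)/c2^2); [field; lra|].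
  now rewrite sqrt_w_sq.
Qed.

Lemma nine_minus_2JL : 9 - 2*J*L = (w/c2)^2.
Proof.
  replace (2*J*L) with (2*(J*L)) by ring. rewrite JL_value.
  apply Rminus_diag_uniq.
  transitivity ((9*c2^2 - 4*(d + A + B)*w - w^2)/c2^2); [field; lra|].
  assert (hmod : 9*c2^2 - 4*(d + A + B)*w - w^2 = 0)
    by (apply (eq_zero_mod_delta A B d _ (-12) hd2); ring).
  rewrite hmod. field. lra.
Qed.

Lemma JL_radicand : J*L + sqrt (9 - 2*J*L) - 3 = (sqrt 2 * sqrt w * a / c2)^2.
Proof.
  rewrite nine_minus_2JL, sqrt_pow2 by (apply Rlt_le, Rdiv_lt_0_compat; lra).
  rewrite JL_value.
  transitivity (2*w*A/c2^2 + (2*(d + A + B)*w + w*c2 - 3*c2^2 - 2*A*w)/c2^2);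
    [field; lra|].
  assert (hmod : 2*(d + A + B)*w + w*c2 - 3*c2^2 - 2*A*w = 0)
    by (apply (eq_zero_mod_delta A B d _ 4 hd2); ring).
  rewrite hmod.
  transitivity ((sqrt 2 * sqrt 2)*(sqrt w * sqrt w)*A/c2^2); [|field; lra].
  rewrite sqrt_w_sq, sqrt_sqrt by lra. field. lra.
Qed.

Lemma JL_minus_4 : J*L - 4 = 2*(d*(A + B) - A^2 - B^2)/c2^2.
Proof.
  rewrite JL_value. apply Rminus_diag_uniq.
  transitivity ((2*(d + A + B)*w - 4*c2^2 - 2*(d*(A + B) - A^2 - B^2))/c2^2);
    [field; lra|].
  assert (hmod : 2*(d + A + B)*w - 4*c2^2 - 2*(d*(A + B) - A^2 - B^2) = 0)
    by (apply (eq_zero_mod_delta A B d _ 4 hd2); ring).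
  rewrite hmod. field. lra.
Qed.

(* The closed form, using (A + B + delta)(delta (A + B) - A^2 - B^2) = A B w. *)
Lemma closed_form_JL :
  (A + B + d)/(a*B) = J*sqrt 2*sqrt (J*L + sqrt (9 - 2*J*L) - 3)/(J*L - 4).
Proof.
  assert (hN : (A + B + d)*(d*(A + B) - A^2 - B^2) - A*B*w = 0)
    by (apply (eq_zero_mod_delta A B d _ (B + A) hd2); ring).
  assert (Npos : 0 < d*(A + B) - A^2 - B^2).
  { assert (0 < A*B*w) by (apply Rmult_lt_0_compat; [apply Rmult_lt_0_compat|]; lra).
    nra. }
  rewrite JL_radicand, sqrt_pow2
    by (apply Rlt_le, Rdiv_lt_0_compat; [|lra];
        apply Rmult_lt_0_compat; [apply Rmult_lt_0_compat; apply sqrt_lt_R0|]; lra).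
  rewrite JL_minus_4, hJ.
  transitivity (2*w*a/c2^2/(2*(d*(A + B) - A^2 - B^2)/c2^2)).
  - apply Rminus_diag_uniq.
    transitivity (((A + B + d)*(d*(A + B) - A^2 - B^2) - A*B*w)
                  / (a*B*(d*(A + B) - A^2 - B^2))); [field; repeat split; lra|].
    rewrite hN. unfold Rdiv. ring.
  - transitivity ((sqrt 2 * sqrt 2)*(sqrt w * sqrt w)*a/c2^2
                  / (2*(d*(A + B) - A^2 - B^2)/c2^2)).
    + now rewrite sqrt_w_sq, sqrt_sqrt by lra.
    + field. repeat split; lra.
Qed.

End ClosedForm.

Lemma three_periodic_common_joach (a b X1 Y1 X2 Y2 X3 Y3 : R) : 0 < a -> 0 < b ->
  X1^2 + Y1^2 = 1 -> X2^2 + Y2^2 = 1 -> X3^2 + Y3^2 = 1 ->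
  (X1 <> X2 \/ Y1 <> Y2) -> (X2 <> X3 \/ Y2 <> Y3) -> (X1 <> X3 \/ Y1 <> Y3) ->
  reflects a b (a*X3, b*Y3) (a*X1, b*Y1) (a*X2, b*Y2) ->
  reflects a b (a*X1, b*Y1) (a*X2, b*Y2) (a*X3, b*Y3) ->
  chord_joach a b X1 Y1 X3 Y3 = chord_joach a b X1 Y1 X2 Y2 /\
  chord_joach a b X2 Y2 X3 Y3 = chord_joach a b X1 Y1 X2 Y2.
Proof.
  intros ha hb on1 on2 on3 n12 n23 n13 r1 r2.
  assert (n21 : X2 <> X1 \/ Y2 <> Y1) by (destruct n12; [left|right]; congruence).
  split.
  - exact (reflects_chord_joach a b _ _ _ _ _ _ ha hb on1 on3 on2 n13 n12 r1).
  - rewrite (chord_joach_sym a b X1), <- (reflects_chord_joach a b _ _ _ _ _ _ ha hb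
      on2 on1 on3 n21 n23 r2).
    reflexivity.
Qed.

Lemma focal_sum_linked (a b k X1 Y1 X2 Y2 X3 Y3 : R) : b < a -> 0 < b -> 0 < k ->
  X1^2 + Y1^2 = 1 -> X2^2 + Y2^2 = 1 -> X3^2 + Y3^2 = 1 ->
  (X1 <> X2 \/ Y1 <> Y2) -> (X2 <> X3 \/ Y2 <> Y3) -> (X3 <> X1 \/ Y3 <> Y1) ->
  let u := k^2*(a^2 - b^2) in let g := k^2*(a^2 + b^2) - 1 in
  linked u g X1 Y1 X2 Y2 -> linked u g X2 Y2 X3 Y3 -> linked u g X3 Y3 X1 Y1 ->
  / (a + cc a b * X1) + / (a + cc a b * X2) + / (a + cc a b * X3)
  = (a^2 + b^2 + delta a b) / (a*b^2).
Proof.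
  intros hab hb hk on1 on2 on3 n12 n23 n31 u g l12 l23 l31.
  assert (ha : 0 < a) by lra. assert (hab2 : b^2 < a^2) by (clear - hab hb; nra).
  pose proof (sq_pos k ltac:(lra)) as hk2. pose proof (sq_pos b ltac:(lra)) as hb2.
  assert (hu : 0 < u) by (apply Rmult_lt_0_compat; lra).
  assert (hg : u - 1 < g).
  { assert (g - (u - 1) = 2*(k^2*b^2)) by (unfold u, g; ring).
    pose proof (Rmult_lt_0_compat _ _ hk2 hb2). lra. }
  destruct (linked_triangle u g X1 Y1 X2 Y2 X3 Y3 hu hg on1 on2 on3 n12 n23 n31 l12 l23 l31)
    as (hug & hS2 & hS13).
  pose proof (delta_sq a b hab hb) as hd2. pose proof (cc_sq a b hab hb) as hc.
  assert (hgc : g*(a^2 - b^2) = u*(a^2 + b^2) - (a^2 - b^2)) by (unfold u, g; ring).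
  pose proof (linked_parameter_value (a^2) (b^2) (delta a b) u g hu hb2 hab2 hd2
                (delta_pos a b hab hb) hgc hug) as hw.
  rewrite <- hc in hw, hgc.
  pose proof (focal_identity a (cc a b) (b^2) (delta a b) u g _ _ _ hu hab2
                hc hd2 hw hgc hS2 hS13) as hid.
  set (c := cc a b) in *.
  apply inv_sum3;
    [ exact (focal_radius_pos a b hab hb X1 Y1 on1)
    | exact (focal_radius_pos a b hab hb X2 Y2 on2)
    | exact (focal_radius_pos a b hab hb X3 Y3 on3)
    | pose proof (Rmult_lt_0_compat _ _ ha hb2); lra | ].
  transitivity ((a^2 + b^2 + delta a b)*(a^3 + a^2*c*(X1 + X2 + X3)
                + a*c^2*(X1*X2 + X1*X3 + X2*X3) + c^3*(X1*X2*X3))); [ring|].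
  rewrite hid. ring.
Qed.

Lemma focal_sum_three_periodic (a b : R) (P1 P2 P3 : pt) : b < a -> 0 < b ->
  three_periodic a b P1 P2 P3 ->
  / pdist P1 (focus1 a b) + / pdist P2 (focus1 a b) + / pdist P3 (focus1 a b)
  = (a^2 + b^2 + delta a b) / (a*b^2).
Proof.
  intros hab hb (n12 & n23 & n31 & o1 & o2 & o3 & r1 & r2 & _).
  assert (ha : 0 < a) by lra.
  destruct (ellipse_param a b P1 ha hb o1) as (X1 & Y1 & -> & on1).
  destruct (ellipse_param a b P2 ha hb o2) as (X2 & Y2 & -> & on2).
  destruct (ellipse_param a b P3 ha hb o3) as (X3 & Y3 & -> & on3).
  apply param_neq in n12, n23, n31.
  assert (n13 : X1 <> X3 \/ Y1 <> Y3) by (destruct n31; [left|right]; congruence).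
  destruct (three_periodic_common_joach a b X1 Y1 X2 Y2 X3 Y3 ha hb on1 on2 on3
              n12 n23 n13 r1 r2) as [k13 k23].
  set (k := chord_joach a b X1 Y1 X2 Y2) in *.
  rewrite !focus_dist by assumption.
  apply (focal_sum_linked a b k X1 Y1 X2 Y2 X3 Y3 hab hb
           (chord_joach_pos a b X1 Y1 X2 Y2 ha hb on1 on2 n12) on1 on2 on3 n12 n23 n31).
  - exact (chord_joach_linked a b _ _ _ _ k ha hb on1 on2 n12 eq_refl).
  - exact (chord_joach_linked a b _ _ _ _ k ha hb on2 on3 n23 k23).
  - exact (linked_sym _ _ _ _ _ _ (chord_joach_linked a b _ _ _ _ k ha hb on1 on3 n13 k13)).
Qed.

Theorem mainTheorem11 (a b : R) (P1 P2 P3 : pt) :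
  a > b -> b > 0 ->
  three_periodic a b P1 P2 P3 ->
  let S := / pdist P1 (focus1 a b) + / pdist P2 (focus1 a b)
           + / pdist P3 (focus1 a b) in
  let J := Jc a b in
  let L := Lp a b in
  S = (a ^ 2 + b ^ 2 + delta a b) / (a * b ^ 2) /\
  (a ^ 2 + b ^ 2 + delta a b) / (a * b ^ 2)
  = J * sqrt 2 * sqrt (J * L + sqrt (9 - 2 * J * L) - 3) / (J * L - 4).
Proof.
  intros hab hb hP S J L. split.
  - exact (focal_sum_three_periodic a b P1 P2 P3 hab hb hP).
  - assert (hb2 : 0 < b^2) by (apply pow_lt; lra).
    assert (hab2 : b^2 < a^2) by nra.
    apply (closed_form_JL a (b^2) (delta a b) J L); try lra.
    + apply (delta_sq a b hab hb).
    + apply (delta_pos a b hab hb).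
    + unfold J, Jc. now rewrite (cc_sq a b hab hb).
    + reflexivity.
Qed.
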